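(* In the setting of the context, let $\mu_1,\mu_2$ be nowhere-equal solutions of $$\widehat e_1\cdot\nabla\mu=-C_{31}^{2}-\mu\big(C_{31}^{3}+C_{12}^{2}\big)-\mu^{2}C_{12}^{3}$$ and let $\alpha_1,\alpha_2$ be nowhere-vanishing functions satisfying $\widehat e_1\cdot\nabla\ln|\alpha_i/\Vert v\Vert|=C_{31}^{3}+\mu_iC_{12}^{3}$ for $i=1,2$. Then the Poisson vector fields $J_i=\alpha_i(\widehat e_2+\mu_i\widehat e_3)$, $i=1,2$, are compatible, i.e. $J_1+J_2$ is also a Poisson vector field.
   Context: Setting: $M$ is an oriented three-dimensional manifold with a Riemannian metric $g$; $\nabla$, $\nabla\times$ and $\times$ denote gradient, curl and cross product. A Poisson vector field is a vector field $J$ with $J\cdot(\nabla\times J)=0$; $J_1,J_2$ are compatible if $J_1+J_2$ is also Poisson. $v$ is a nowhere vanishing vector field, $\widehat e_1=v/\Vert v\Vert$, extended to a local oriented orthonormal frame $(\widehat e_1,\widehat e_2,\widehat e_3)$ with $\widehat e_3=\widehat e_1\times\widehat e_2$, and structure functions $C_{ij}^k$ defined by $[\widehat e_i,\widehat e_j]=C_{ij}^k\widehat e_k$. *)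

From Stdlib Require Import Reals Lra.
From Coquelicot Require Import Coquelicot.
Open Scope R_scope.

(* Points of an (oriented) coordinate chart of M, viewed as an open subset of R^3.
   Coordinates are indexed 0,1,2. *)
Definition pt := (R * R * R)%type.

Definition coord (p : pt) (i : nat) : R :=
  match i with
  | O => fst (fst p)
  | S O => snd (fst p)
  | _ => snd p
  end.

Definition upd (p : pt) (i : nat) (t : R) : pt :=
  match i with
  | O => (t, snd (fst p), snd p)
  | S O => (fst (fst p), t, snd p)
  | _ => (fst (fst p), snd (fst p), t)
  end.

Definition pd (i : nat) (f : pt -> R) (p : pt) : R :=
  Derive (fun t => f (upd p i t)) (coord p i).

Fixpoint Ck (k : nat) (U : pt -> Prop) (f : pt -> R) : Prop :=
  match k with
  | O => forall p, U p -> continuous f p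
  | S k' =>
      (forall p, U p -> continuous f p) /\
      (forall i p, (i < 3)%nat -> U p -> ex_derive (fun t => f (upd p i t)) (coord p i)) /\
      (forall i, (i < 3)%nat -> Ck k' U (pd i f))
  end.

Definition smooth (U : pt -> Prop) (f : pt -> R) : Prop := forall k, Ck k U f.

Definition sum3 (f : nat -> R) : R := f 0%nat + f 1%nat + f 2%nat.

Definition eps (a b c : nat) : R :=
  match a, b, c with
  | O, S O, S (S O) => 1 | S O, S (S O), O => 1 | S (S O), O, S O => 1
  | O, S (S O), S O => -1 | S (S O), S O, O => -1 | S O, O, S (S O) => -1
  | _, _, _ => 0
  end.

(* vector fields: component index -> point -> value (coordinate components) *)
Definition vf := nat -> pt -> R.
Definition metric := nat -> nat -> pt -> R.

Definition smooth_vf (U : pt -> Prop) (X : vf) : Prop :=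
  forall a, (a < 3)%nat -> smooth U (X a).

Definition riemannian (U : pt -> Prop) (g : metric) : Prop :=
  (forall a b, (a < 3)%nat -> (b < 3)%nat -> smooth U (g a b)) /\
  (forall a b p, U p -> g a b p = g b a p) /\
  (forall p (x : nat -> R), U p -> ~ (x 0%nat = 0 /\ x 1%nat = 0 /\ x 2%nat = 0) ->
     0 < sum3 (fun a => sum3 (fun b => g a b p * x a * x b))).

Definition dot (g : metric) (X Y : vf) (p : pt) : R :=
  sum3 (fun a => sum3 (fun b => g a b p * X a p * Y b p)).

Definition vnorm (g : metric) (X : vf) (p : pt) : R := sqrt (dot g X X p).

Definition detg (g : metric) (p : pt) : R :=
  sum3 (fun a => sum3 (fun b => sum3 (fun c =>
    eps a b c * g 0%nat a p * g 1%nat b p * g 2%nat c p))).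

(* inverse metric g^{ab} = adj(g)_{ab} / det g *)
Definition ginv (g : metric) (a b : nat) (p : pt) : R :=
  (/ 2 * sum3 (fun m => sum3 (fun n => sum3 (fun r => sum3 (fun s =>
      eps a m n * eps b r s * g m r p * g n s p))))) / detg g p.

Definition flat (g : metric) (X : vf) (c : nat) (p : pt) : R :=
  sum3 (fun d => g c d p * X d p).

Definition grad (g : metric) (f : pt -> R) : vf :=
  fun a p => sum3 (fun b => ginv g a b p * pd b f p).

(* curl w.r.t. the Riemannian volume form of the oriented chart:
   (curl X)^a = (1/sqrt det g) eps^{abc} d_b X_c *)
Definition curl (g : metric) (X : vf) : vf :=
  fun a p => / sqrt (detg g p) *
    sum3 (fun b => sum3 (fun c => eps a b c * pd b (flat g X c) p)).

(* cross product: (X x Y)_d = sqrt(det g) eps_{dbc} X^b Y^c, index raised *)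
Definition cross (g : metric) (X Y : vf) : vf :=
  fun a p => sum3 (fun d => ginv g a d p *
    (sqrt (detg g p) * sum3 (fun b => sum3 (fun c => eps d b c * X b p * Y c p)))).

Definition bracket (X Y : vf) : vf :=
  fun b p => sum3 (fun a => X a p * pd a (Y b) p - Y a p * pd a (X b) p).

Definition vadd (X Y : vf) : vf := fun a p => X a p + Y a p.

Definition poisson (U : pt -> Prop) (g : metric) (J : vf) : Prop :=
  forall p, U p -> dot g J (curl g J) p = 0.

Definition compatible (U : pt -> Prop) (g : metric) (J1 J2 : vf) : Prop :=
  poisson U g J1 /\ poisson U g J2 /\ poisson U g (vadd J1 J2).

(* the frame: e1 = v/|v|, e2 given, e3 = e1 x e2; indexed 1,2,3 as in the paper *)
Definition e1_of (g : metric) (v : vf) : vf := fun a p => v a p / vnorm g v p.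
Definition e3_of (g : metric) (v e2 : vf) : vf := cross g (e1_of g v) e2.
Definition frame (g : metric) (v e2 : vf) (i : nat) : vf :=
  match i with
  | 1%nat => e1_of g v
  | 2%nat => e2
  | _ => e3_of g v e2
  end.

Definition ddir (g : metric) (X : vf) (f : pt -> R) (p : pt) : R := dot g X (grad g f) p.

Definition Jfield (g : metric) (v e2 : vf) (alpha mu : pt -> R) : vf :=
  fun a p => alpha p * (e2 a p + mu p * e3_of g v e2 a p).

(* In the orthonormal frame, [J = A e_2 + B e_3] has covariant components [(0, A, B)].
   Since [J_1] vanishes identically, [[e_i, e_j] = C_ij^k e_k] turns [J . curl J] into a
   nonzero multiple of
     [A (- e_1 B - C_31^2 A - C_31^3 B) + B (e_1 A - C_12^2 A - C_12^3 B)].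
   For [J = alpha (e_2 + mu e_3)] this is
   [- alpha^2 (e_1 mu + C_31^2 + mu (C_31^3 + C_12^2) + mu^2 C_12^3)], which the Riccati
   equation kills. For [J_1 + J_2] the Riccati equations reduce the cross terms to
   [(mu_1 - mu_2) (alpha_1 alpha_2 C_12^3 (mu_1 - mu_2)
                   + alpha_1 e_1 alpha_2 - alpha_2 e_1 alpha_1)],
   which vanishes because the condition on [alpha_i] says
   [e_1 alpha_i = alpha_i (C_31^3 + mu_i C_12^3 + e_1 |v| / |v|)]. *)

From Stdlib Require Import Reals Lra Lia.
From Coquelicot Require Import Coquelicot.
Open Scope R_scope.

Definition sym_at (g : metric) (p : pt) : Prop := forall a b, g a b p = g b a p.

Definition cofactor (g : metric) (p : pt) (a b : nat) : R :=
  let g00 := g 0%nat 0%nat p in let g01 := g 0%nat 1%nat p in let g02 := g 0%nat 2%nat p in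
  let g11 := g 1%nat 1%nat p in let g12 := g 1%nat 2%nat p in let g22 := g 2%nat 2%nat p in
  match a, b with
  | O, O => g11 * g22 - g12 * g12
  | O, S O | S O, O => g02 * g12 - g01 * g22
  | O, S (S O) | S (S O), O => g01 * g12 - g02 * g11
  | S O, S O => g00 * g22 - g02 * g02
  | S O, S (S O) | S (S O), S O => g01 * g02 - g00 * g12
  | S (S O), S (S O) => g00 * g11 - g01 * g01
  | _, _ => 0
  end.

Definition detg_sym (g : metric) (p : pt) : R :=
  let g00 := g 0%nat 0%nat p in let g01 := g 0%nat 1%nat p in let g02 := g 0%nat 2%nat p in
  let g11 := g 1%nat 1%nat p in let g12 := g 1%nat 2%nat p in let g22 := g 2%nat 2%nat p in
  g00 * (g11 * g22 - g12 * g12) - g01 * (g01 * g22 - g12 * g02)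
  + g02 * (g01 * g12 - g11 * g02).

Ltac sym_metric Hs := rewrite ?(Hs 1%nat 0%nat), ?(Hs 2%nat 0%nat), ?(Hs 2%nat 1%nat).

Lemma detg_symE g p : sym_at g p -> detg g p = detg_sym g p.
Proof. intros Hs. unfold detg, detg_sym, sum3, eps; simpl. sym_metric Hs. ring. Qed.

Lemma ginv_cofactor g p a b : sym_at g p -> (a < 3)%nat -> (b < 3)%nat ->
  ginv g a b p = cofactor g p a b / detg_sym g p.
Proof.
intros Hs Ha Hb. rewrite <- detg_symE by exact Hs. unfold ginv.
destruct a as [|[|[|a]]]; try lia; destruct b as [|[|[|b]]]; try lia;
  unfold cofactor, sum3, eps; simpl; sym_metric Hs; unfold Rdiv;
  apply Rmult_eq_compat_r; field.
Qed.

Lemma dot_sym g X Y p : sym_at g p -> dot g X Y p = dot g Y X p.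
Proof. intros Hs. unfold dot, sum3. sym_metric Hs. ring. Qed.

Lemma dot_flat g X Y p : sym_at g p -> sum3 (fun c => flat g X c p * Y c p) = dot g X Y p.
Proof. intros Hs. unfold flat, dot, sum3. sym_metric Hs. ring. Qed.

(* Sylvester's criterion, tested on the vectors (0,1,0), (g11,-g01,0) and the
   last row of the cofactor matrix. *)
Lemma detg_sym_pos g p :
  sym_at g p ->
  (forall x : nat -> R, ~ (x 0%nat = 0 /\ x 1%nat = 0 /\ x 2%nat = 0) ->
     0 < sum3 (fun a => sum3 (fun b => g a b p * x a * x b))) ->
  0 < detg_sym g p.
Proof.
intros Hs Hpos.
assert (Hq : forall x : nat -> R, ~ (x 0%nat = 0 /\ x 1%nat = 0 /\ x 2%nat = 0) ->
  0 < g 0%nat 0%nat p * x 0%nat ^ 2 + g 1%nat 1%nat p * x 1%nat ^ 2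
      + g 2%nat 2%nat p * x 2%nat ^ 2 + 2 * g 0%nat 1%nat p * x 0%nat * x 1%nat
      + 2 * g 0%nat 2%nat p * x 0%nat * x 2%nat + 2 * g 1%nat 2%nat p * x 1%nat * x 2%nat).
{ intros x Hx. eapply Rlt_le_trans; [exact (Hpos x Hx)|].
  right. unfold sum3. sym_metric Hs. ring. }
unfold detg_sym.
set (g00 := g 0%nat 0%nat p) in *; set (g01 := g 0%nat 1%nat p) in *;
set (g02 := g 0%nat 2%nat p) in *; set (g11 := g 1%nat 1%nat p) in *;
set (g12 := g 1%nat 2%nat p) in *; set (g22 := g 2%nat 2%nat p) in *.
assert (H11 : 0 < g11).
{ specialize (Hq (fun i => if Nat.eqb i 1 then 1 else 0)); simpl in Hq.
  match type of Hq with _ -> 0 < ?Q => replace g11 with Q by ring end.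
  apply Hq. lra. }
assert (Hminor : 0 < g00 * g11 - g01 * g01).
{ specialize (Hq (fun i => match i with 0%nat => g11 | 1%nat => - g01 | _ => 0 end)); simpl in Hq.
  apply (Rmult_lt_reg_l g11); [exact H11|].
  match type of Hq with _ -> 0 < ?Q =>
    replace (g11 * (g00 * g11 - g01 * g01)) with Q by ring end.
  rewrite Rmult_0_r. apply Hq. lra. }
specialize (Hq (fun i => match i with 0%nat => g01 * g12 - g02 * g11
  | 1%nat => g01 * g02 - g00 * g12 | _ => g00 * g11 - g01 * g01 end)); simpl in Hq.
apply (Rmult_lt_reg_r (g00 * g11 - g01 * g01)); [exact Hminor|].
match type of Hq with _ -> 0 < ?Q =>
  match goal with |- _ < ?L => replace L with Q by ring end end.
rewrite Rmult_0_l. apply Hq. lra.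
Qed.

Ltac expand_cross Hs :=
  unfold dot, cross, sum3; rewrite ?detg_symE by exact Hs;
  rewrite ?ginv_cofactor by (exact Hs || lia); unfold cofactor, detg_sym, eps; simpl;
  sym_metric Hs.

Ltac det_nonzero := unfold detg_sym in *; cbv zeta in *; lra.

Section MetricAtPoint.
Variables (g : metric) (p : pt).
Hypothesis Hs : sym_at g p.
Hypothesis Hdet : 0 < detg_sym g p.

Lemma cross_orthl X Y : dot g X (cross g X Y) p = 0.
Proof. expand_cross Hs. field; det_nonzero. Qed.

Lemma cross_orthr X Y : dot g Y (cross g X Y) p = 0.
Proof. expand_cross Hs. field; det_nonzero. Qed.

Lemma dot_cross_cross X Y :
  dot g (cross g X Y) (cross g X Y) p = dot g X X p * dot g Y Y p - (dot g X Y p) ^ 2.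
Proof.
assert (Hsqrt : sqrt (detg_sym g p) * sqrt (detg_sym g p) = detg_sym g p)
  by (apply sqrt_sqrt; lra).
transitivity (sqrt (detg_sym g p) * sqrt (detg_sym g p)
  * (dot g X X p * dot g Y Y p - (dot g X Y p) ^ 2) / detg_sym g p).
- unfold dot, cross; cbv beta. rewrite detg_symE by exact Hs.
  generalize (sqrt (detg_sym g p)); intros s. expand_cross Hs. field; det_nonzero.
- rewrite Hsqrt. field; det_nonzero.
Qed.

Lemma ddirE X h : ddir g X h p = sum3 (fun c => X c p * pd c h p).
Proof.
unfold ddir, dot, grad, sum3. rewrite ?ginv_cofactor by (exact Hs || lia).
unfold cofactor, detg_sym; simpl. sym_metric Hs.
field; det_nonzero.
Qed.

End MetricAtPoint.

Lemma dot_curlE g J p : sym_at g p ->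
  dot g J (curl g J) p = / sqrt (detg g p) *
    sum3 (fun b => sum3 (fun c => sum3 (fun d =>
      eps b c d * flat g J b p * pd c (flat g J d) p))).
Proof.
intros Hs. unfold dot, curl.
generalize (sqrt (detg g p)) (fun c d => pd c (flat g J d) p); intros s D.
unfold flat, sum3, eps; simpl. sym_metric Hs. ring.
Qed.

Definition det3 (M : nat -> nat -> R) : R :=
  sum3 (fun a => sum3 (fun b => sum3 (fun c => eps a b c * M 0%nat a * M 1%nat b * M 2%nat c))).

Lemma det3_ext M N : (forall i j, (i < 3)%nat -> (j < 3)%nat -> M i j = N i j) ->
  det3 M = det3 N.
Proof. intros H. unfold det3, sum3. rewrite !H by lia. reflexivity. Qed.

Lemma det3_mul_tr (A B : nat -> nat -> R) :
  det3 (fun i j => sum3 (fun c => A i c * B j c)) = det3 A * det3 B.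
Proof. unfold det3, sum3, eps; simpl. ring. Qed.

Lemma det3_1 : det3 (fun i j => if Nat.eqb i j then 1 else 0) = 1.
Proof. unfold det3, sum3, eps; simpl. ring. Qed.

Lemma det3_eps_change (E : nat -> nat -> R) (W : nat -> R) (D : nat -> nat -> R) :
  det3 E * sum3 (fun b => sum3 (fun c => sum3 (fun d => eps b c d * W b * D c d)))
  = sum3 (fun i => sum3 (fun j => sum3 (fun k => eps i j k * sum3 (fun b => W b * E i b) *
      sum3 (fun c => sum3 (fun d => E j c * E k d * D c d))))).
Proof. unfold det3, sum3, eps; simpl. ring. Qed.

Definition ex_pd (c : nat) (f : pt -> R) (p : pt) : Prop :=
  ex_derive (fun t => f (upd p c t)) (coord p c).

Lemma upd_coord p c : upd p c (coord p c) = p.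
Proof. destruct p as [[x y] z]; destruct c as [|[|c]]; reflexivity. Qed.

Section PartialDerivatives.
Variables (c : nat) (p : pt).

Lemma ex_pd_const (a : R) : ex_pd c (fun _ => a) p.
Proof. unfold ex_pd. apply ex_derive_const. Qed.

Lemma ex_pd_plus f h : ex_pd c f p -> ex_pd c h p -> ex_pd c (fun q => f q + h q) p.
Proof. intros Hf Hh. exact (ex_derive_plus _ _ _ Hf Hh). Qed.

Lemma ex_pd_opp f : ex_pd c f p -> ex_pd c (fun q => - f q) p.
Proof. intros Hf. exact (ex_derive_opp _ _ Hf). Qed.

Lemma ex_pd_mult f h : ex_pd c f p -> ex_pd c h p -> ex_pd c (fun q => f q * h q) p.
Proof. intros Hf Hh. exact (ex_derive_mult _ _ _ Hf Hh). Qed.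

Lemma ex_pd_inv f : ex_pd c f p -> f p <> 0 -> ex_pd c (fun q => / f q) p.
Proof.
intros Hf Hf0. unfold ex_pd. apply (ex_derive_inv (fun t => f (upd p c t))); [exact Hf|].
rewrite upd_coord; exact Hf0.
Qed.

Lemma ex_pd_div f h : ex_pd c f p -> ex_pd c h p -> h p <> 0 ->
  ex_pd c (fun q => f q / h q) p.
Proof. intros Hf Hh Hh0. apply ex_pd_mult; [exact Hf|]. apply ex_pd_inv; assumption. Qed.

Lemma ex_pd_sqrt f : ex_pd c f p -> 0 < f p -> ex_pd c (fun q => sqrt (f q)) p.
Proof.
intros [d Hd] Hf0. unfold ex_pd. eexists.
apply (is_derive_sqrt (fun t => f (upd p c t))); [exact Hd|].
rewrite upd_coord; exact Hf0.
Qed.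

Lemma ex_pd_sum3 (F : nat -> pt -> R) :
  ex_pd c (F 0%nat) p -> ex_pd c (F 1%nat) p -> ex_pd c (F 2%nat) p ->
  ex_pd c (fun q => sum3 (fun i => F i q)) p.
Proof. intros. unfold sum3. apply ex_pd_plus; [apply ex_pd_plus|]; assumption. Qed.

Lemma pd_const (a : R) : pd c (fun _ => a) p = 0.
Proof. unfold pd. apply Derive_const. Qed.

Lemma pd_plus f h : ex_pd c f p -> ex_pd c h p ->
  pd c (fun q => f q + h q) p = pd c f p + pd c h p.
Proof. unfold pd. apply (Derive_plus (fun t => f (upd p c t)) (fun t => h (upd p c t))). Qed.

Lemma pd_mult f h : ex_pd c f p -> ex_pd c h p ->
  pd c (fun q => f q * h q) p = pd c f p * h p + f p * pd c h p.
Proof.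
intros Hf Hh. unfold pd.
rewrite (Derive_mult (fun t => f (upd p c t)) (fun t => h (upd p c t))) by assumption.
rewrite upd_coord. reflexivity.
Qed.

Lemma pd_sum3 (F : nat -> pt -> R) :
  ex_pd c (F 0%nat) p -> ex_pd c (F 1%nat) p -> ex_pd c (F 2%nat) p ->
  pd c (fun q => sum3 (fun i => F i q)) p = sum3 (fun i => pd c (F i) p).
Proof.
intros H0 H1 H2. unfold sum3.
rewrite (pd_plus (fun q => F 0%nat q + F 1%nat q) (F 2%nat) (ex_pd_plus _ _ H0 H1) H2).
rewrite (pd_plus _ _ H0 H1). reflexivity.
Qed.

Lemma pd_ext_open (U : pt -> Prop) f h : open U -> U p -> (forall q, U q -> f q = h q) ->
  pd c f p = pd c h p.
Proof.
intros HU Hp Efh. unfold pd. apply Derive_ext_loc.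
destruct (HU p Hp) as [e He]. exists e. intros t Ht. apply Efh, He.
destruct p as [[x y] z]; destruct c as [|[|c']]; simpl in *;
  repeat split; first [apply ball_center | exact Ht].
Qed.

Lemma ex_pd_smooth (U : pt -> Prop) f : smooth U f -> (c < 3)%nat -> U p -> ex_pd c f p.
Proof. intros Hf Hc Hp. destruct (Hf 1%nat) as [_ [Hd _]]. exact (Hd c p Hc Hp). Qed.

End PartialDerivatives.

Lemma is_derive_ln_abs y : y <> 0 -> is_derive (fun t => ln (Rabs t)) y (/ y).
Proof.
intros Hy. destruct (Rlt_or_le 0 y) as [Hpos|Hneg].
- apply (is_derive_ext_loc ln).
  + apply (filter_imp (fun u => 0 < u)); [|exact (open_gt 0 y Hpos)].
    intros u Hu. rewrite Rabs_pos_eq by lra. reflexivity.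
  + apply is_derive_ln; exact Hpos.
- apply (is_derive_ext_loc (fun t => ln (- t))).
  + apply (filter_imp (fun u => u < 0)); [|apply (open_lt 0 y); lra].
    intros u Hu. rewrite Rabs_left by exact Hu. reflexivity.
  + auto_derive; [lra|]. field. lra.
Qed.

Lemma pd_ln_abs_div c p (a n : pt -> R) : ex_pd c a p -> ex_pd c n p -> a p <> 0 -> 0 < n p ->
  pd c (fun q => ln (Rabs (a q / n q))) p = pd c a p / a p - pd c n p / n p.
Proof.
intros [da Ha] [dn Hn] Ha0 Hn0. unfold pd.
replace (Derive (fun t => a (upd p c t)) (coord p c)) with da
  by (symmetry; apply is_derive_unique; exact Ha).
replace (Derive (fun t => n (upd p c t)) (coord p c)) with dn
  by (symmetry; apply is_derive_unique; exact Hn).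
apply is_derive_unique.
replace (da / a p - dn / n p) with (scal ((da * n p - a p * dn) / n p ^ 2) (/ (a p / n p)))
  by (unfold scal; simpl; unfold mult; simpl; field; split; lra).
apply (is_derive_comp (fun y => ln (Rabs y)) (fun t => a (upd p c t) / n (upd p c t))).
- rewrite !upd_coord. apply is_derive_ln_abs.
  unfold Rdiv. apply Rmult_integral_contrapositive_currified; [exact Ha0|].
  apply Rinv_neq_0_compat; lra.
- pose proof (is_derive_div _ _ _ _ _ Ha Hn) as Hd. cbv beta in Hd.
  rewrite !upd_coord in Hd. apply Hd. lra.
Qed.

Definition frame_deriv (E : nat -> vf) (k : nat) (h : pt -> R) (p : pt) : R :=
  sum3 (fun c => E k c p * pd c h p).

Definition frame_comp (g : metric) (E : nat -> vf) (J : vf) (k : nat) (q : pt) : R :=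
  sum3 (fun d => flat g J d q * E k d q).

Definition frame_helicity (E : nat -> vf) (C : nat -> nat -> nat -> pt -> R)
  (A B : pt -> R) (p : pt) : R :=
  A p * (- frame_deriv E 1 B p - C 3%nat 1%nat 2%nat p * A p - C 3%nat 1%nat 3%nat p * B p)
  + B p * (frame_deriv E 1 A p - C 1%nat 2%nat 2%nat p * A p - C 1%nat 2%nat 3%nat p * B p).

Lemma frame_deriv_plus E k f h p :
  (forall c, (c < 3)%nat -> ex_pd c f p) -> (forall c, (c < 3)%nat -> ex_pd c h p) ->
  frame_deriv E k (fun q => f q + h q) p = frame_deriv E k f p + frame_deriv E k h p.
Proof.
intros Hf Hh. unfold frame_deriv, sum3. rewrite !pd_plus by (apply Hf || apply Hh; lia). ring.
Qed.

Lemma frame_deriv_mult E k f h p :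
  (forall c, (c < 3)%nat -> ex_pd c f p) -> (forall c, (c < 3)%nat -> ex_pd c h p) ->
  frame_deriv E k (fun q => f q * h q) p
  = frame_deriv E k f p * h p + f p * frame_deriv E k h p.
Proof.
intros Hf Hh. unfold frame_deriv, sum3. rewrite !pd_mult by (apply Hf || apply Hh; lia). ring.
Qed.

Lemma frame_deriv_ext_open U E k f h p : open U -> U p -> (forall q, U q -> f q = h q) ->
  frame_deriv E k f p = frame_deriv E k h p.
Proof.
intros HU Hp Efh. unfold frame_deriv, sum3. rewrite !(pd_ext_open _ p U f h HU Hp Efh).
reflexivity.
Qed.

Lemma frame_deriv_const E k (a : R) p : frame_deriv E k (fun _ => a) p = 0.
Proof. unfold frame_deriv, sum3. rewrite !pd_const. ring. Qed.

Lemma frame_comp_vadd g E J1 J2 k q :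
  frame_comp g E (vadd J1 J2) k q = frame_comp g E J1 k q + frame_comp g E J2 k q.
Proof. unfold frame_comp, flat, vadd, sum3. ring. Qed.

Lemma eps_frame_sum (f : nat -> R) (M : nat -> nat -> R) :
  sum3 (fun i => sum3 (fun j => sum3 (fun k => eps i j k * f (S i) * M (S j) (S k))))
  = f 1%nat * (M 2%nat 3%nat - M 3%nat 2%nat) + f 2%nat * (M 3%nat 1%nat - M 1%nat 3%nat)
    + f 3%nat * (M 1%nat 2%nat - M 2%nat 1%nat).
Proof. unfold sum3, eps; simpl. ring. Qed.

Section CurlInFrame.
Variables (U : pt -> Prop) (g : metric) (E : nat -> vf) (C : nat -> nat -> nat -> pt -> R)
  (J : vf) (A B : pt -> R) (p : pt).

Hypothesis HU : open U.
Hypothesis Hp : U p.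
Hypothesis Hs : sym_at g p.
Hypothesis Hflat_ex : forall c d, (c < 3)%nat -> (d < 3)%nat -> ex_pd c (flat g J d) p.
Hypothesis Hframe_ex :
  forall c k d, (c < 3)%nat -> (d < 3)%nat -> ex_pd c (E k d) p.
Hypothesis Hdual : forall i j, (i < 3)%nat -> (j < 3)%nat ->
  sum3 (fun c => flat g (E (S i)) c p * E (S j) c p)
  = if Nat.eqb i j then 1 else 0.
Hypothesis Hbracket : forall i j b, (1 <= i <= 3)%nat -> (1 <= j <= 3)%nat ->
  bracket (E i) (E j) b p
  = C i j 1%nat p * E 1%nat b p + C i j 2%nat p * E 2%nat b p
    + C i j 3%nat p * E 3%nat b p.
Hypothesis Hcomps : forall q, U q ->
  frame_comp g E J 1 q = 0 /\ frame_comp g E J 2 q = A q /\ frame_comp g E J 3 q = B q.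

Let dflat (j k : nat) : R := sum3 (fun c => sum3 (fun d =>
  E j c p * E k d p * pd c (flat g J d) p)).

Lemma dflat_antisym j k : dflat j k - dflat k j =
  frame_deriv E j (frame_comp g E J k) p - frame_deriv E k (frame_comp g E J j) p
  - sum3 (fun d => flat g J d p * bracket (E j) (E k) d p).
Proof.
assert (Hpd : forall c l, (c < 3)%nat -> pd c (frame_comp g E J l) p
  = sum3 (fun d => pd c (flat g J d) p * E l d p
                   + flat g J d p * pd c (E l d) p)).
{ intros c l Hc.
  assert (Hprod : forall d, (d < 3)%nat ->
    pd c (fun q => flat g J d q * E l d q) p
    = pd c (flat g J d) p * E l d p + flat g J d p * pd c (E l d) p)
    by (intros; apply pd_mult; [apply Hflat_ex | apply Hframe_ex]; lia).
  assert (Hprod_ex : forall d, (d < 3)%nat ->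
    ex_pd c (fun q => flat g J d q * E l d q) p)
    by (intros; apply ex_pd_mult; [apply Hflat_ex | apply Hframe_ex]; lia).
  unfold frame_comp. rewrite pd_sum3 by (apply Hprod_ex; lia).
  unfold sum3. rewrite !Hprod by lia. reflexivity. }
unfold dflat, frame_deriv, bracket, sum3. rewrite !Hpd by lia. unfold sum3. ring.
Qed.

Lemma flat_bracket j k : (1 <= j <= 3)%nat -> (1 <= k <= 3)%nat ->
  sum3 (fun d => flat g J d p * bracket (E j) (E k) d p)
  = C j k 1%nat p * frame_comp g E J 1 p + C j k 2%nat p * frame_comp g E J 2 p
    + C j k 3%nat p * frame_comp g E J 3 p.
Proof.
intros Hj Hk. unfold sum3. rewrite !Hbracket by assumption. unfold frame_comp, sum3. ring.
Qed.

Lemma poisson_at_of_frame_helicity :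
  frame_helicity E C A B p = 0 -> dot g J (curl g J) p = 0.
Proof.
intros Hhel. rewrite dot_curlE by exact Hs.
set (Ep := fun i c => E (S i) c p).
set (T := sum3 (fun b => sum3 (fun c => sum3 (fun d =>
  eps b c d * flat g J b p * pd c (flat g J d) p)))).
assert (HE : det3 Ep <> 0).
{ intros HE0.
  assert (H1 : det3 (fun i j => sum3 (fun c => flat g (E (S i)) c p * Ep j c)) = 1).
  { rewrite <- det3_1. apply det3_ext. intros; apply Hdual; assumption. }
  rewrite det3_mul_tr, HE0, Rmult_0_r in H1. lra. }
assert (HT : det3 Ep * T =
  frame_comp g E J 1 p * (dflat 2 3 - dflat 3 2)
  + frame_comp g E J 2 p * (dflat 3 1 - dflat 1 3)
  + frame_comp g E J 3 p * (dflat 1 2 - dflat 2 1)).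
{ unfold T. rewrite det3_eps_change.
  exact (eps_frame_sum (fun k => frame_comp g E J k p) dflat). }
destruct (Hcomps p Hp) as [F1 [F2 F3]].
rewrite (dflat_antisym 3 1), (dflat_antisym 1 2), !flat_bracket in HT by lia.
rewrite (frame_deriv_ext_open U E 3 (frame_comp g E J 1) (fun _ => 0)),
  (frame_deriv_ext_open U E 2 (frame_comp g E J 1) (fun _ => 0)),
  (frame_deriv_ext_open U E 1 (frame_comp g E J 2) A),
  (frame_deriv_ext_open U E 1 (frame_comp g E J 3) B) in HT
  by (try assumption; intros q Hq; apply (Hcomps q Hq)).
rewrite !frame_deriv_const, F1, F2, F3 in HT.
assert (HT0 : det3 Ep * T = 0).
{ rewrite HT. transitivity (frame_helicity E C A B p); [|exact Hhel].
  unfold frame_helicity. ring. }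
apply Rmult_integral in HT0 as [HE0 | ->]; [contradiction | ring].
Qed.

End CurlInFrame.

Lemma riemannian_sym U g q : riemannian U g -> U q -> sym_at g q.
Proof. intros [_ [Hsym _]] Hq a b. exact (Hsym a b q Hq). Qed.

Lemma riemannian_detg_sym_pos U g q : riemannian U g -> U q -> 0 < detg_sym g q.
Proof.
intros HR Hq. apply detg_sym_pos; [exact (riemannian_sym U g q HR Hq)|].
intros x Hx. destruct HR as [_ [_ Hpos]]. exact (Hpos q x Hq Hx).
Qed.

Lemma riemannian_dot_pos U g (X : vf) q : riemannian U g -> U q ->
  ~ (X 0%nat q = 0 /\ X 1%nat q = 0 /\ X 2%nat q = 0) -> 0 < dot g X X q.
Proof. intros [_ [_ Hpos]] Hq HX. exact (Hpos q (fun a => X a q) Hq HX). Qed.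

Lemma dot_e1_e1 g (v : vf) q : 0 < dot g v v q -> dot g (e1_of g v) (e1_of g v) q = 1.
Proof.
intros Hv. assert (Hn : vnorm g v q * vnorm g v q = dot g v v q) by (apply sqrt_sqrt; lra).
assert (Hn0 : 0 < vnorm g v q) by (apply sqrt_lt_R0; exact Hv).
transitivity (dot g v v q / (vnorm g v q * vnorm g v q)).
- unfold dot, e1_of, sum3. field. lra.
- rewrite Hn. field. lra.
Qed.

Section Orthonormality.
Variables (g : metric) (v e2 : vf) (q : pt).
Hypothesis Hs : sym_at g q.
Hypothesis Hdet : 0 < detg_sym g q.
Hypothesis Hv : 0 < dot g v v q.
Hypothesis He12 : dot g (e1_of g v) e2 q = 0.
Hypothesis He22 : dot g e2 e2 q = 1.

Lemma frame_orthonormal i j : (1 <= i <= 3)%nat -> (1 <= j <= 3)%nat ->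
  dot g (frame g v e2 i) (frame g v e2 j) q = if Nat.eqb i j then 1 else 0.
Proof.
intros Hi Hj.
destruct i as [|[|[|[|i]]]]; try lia; destruct j as [|[|[|[|j]]]]; try lia;
  simpl; unfold e3_of; rewrite ?(dot_sym g (cross _ _ _)) by exact Hs.
- exact (dot_e1_e1 g v q Hv).
- exact He12.
- exact (cross_orthl g q Hs Hdet _ _).
- rewrite dot_sym by exact Hs. exact He12.
- exact He22.
- exact (cross_orthr g q Hs Hdet _ _).
- exact (cross_orthl g q Hs Hdet _ _).
- exact (cross_orthr g q Hs Hdet _ _).
- rewrite dot_cross_cross, dot_e1_e1, He12, He22 by assumption. ring.
Qed.

End Orthonormality.

Section FrameRegularity.
Variables (g : metric) (v e2 : vf) (p : pt) (c : nat).
Hypothesis Hg_ex : forall a b, (a < 3)%nat -> (b < 3)%nat -> ex_pd c (g a b) p.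
Hypothesis Hv_ex : forall a, (a < 3)%nat -> ex_pd c (v a) p.
Hypothesis He2_ex : forall a, (a < 3)%nat -> ex_pd c (e2 a) p.
Hypothesis Hs : sym_at g p.
Hypothesis Hdet : 0 < detg_sym g p.
Hypothesis Hv : 0 < dot g v v p.

Ltac ex_pd_poly leaf :=
  repeat match goal with
  | |- ex_pd _ (fun _ => ?a) _ => apply (ex_pd_const _ _ a)
  | |- ex_pd ?c (fun q => sum3 (fun i => @?F q i)) ?p =>
      apply (ex_pd_sum3 c p (fun i q => F q i)); cbv beta
  | |- ex_pd ?c (fun q => @?f q + @?h q) ?p => apply (ex_pd_plus c p f h)
  | |- ex_pd ?c (fun q => @?f q * @?h q) ?p => apply (ex_pd_mult c p f h)
  | |- ex_pd ?c (fun q => - @?f q) ?p => apply (ex_pd_opp c p f)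
  | |- ex_pd _ (fun q => g ?a ?b q) _ => exact (Hg_ex a b ltac:(lia) ltac:(lia))
  | |- ex_pd _ _ _ => leaf
  end.

Lemma ex_pd_detg : ex_pd c (detg g) p.
Proof. unfold detg. ex_pd_poly fail. Qed.

Lemma ex_pd_ginv a b : ex_pd c (ginv g a b) p.
Proof.
unfold ginv. apply ex_pd_div; [ex_pd_poly fail | exact ex_pd_detg |].
rewrite detg_symE by exact Hs. lra.
Qed.

Lemma ex_pd_sqrt_detg : ex_pd c (fun q => sqrt (detg g q)) p.
Proof. apply ex_pd_sqrt; [exact ex_pd_detg|]. rewrite detg_symE by exact Hs. exact Hdet. Qed.

Lemma ex_pd_dot (X Y : vf) :
  (forall a, (a < 3)%nat -> ex_pd c (X a) p) -> (forall a, (a < 3)%nat -> ex_pd c (Y a) p) ->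
  ex_pd c (dot g X Y) p.
Proof.
intros HX HY. unfold dot.
ex_pd_poly ltac:(idtac; match goal with
  | |- ex_pd _ (fun q => X ?a q) _ => exact (HX a ltac:(lia))
  | |- ex_pd _ (fun q => Y ?a q) _ => exact (HY a ltac:(lia)) end).
Qed.

Lemma ex_pd_e1 a : (a < 3)%nat -> ex_pd c (e1_of g v a) p.
Proof.
intros Ha. unfold e1_of, vnorm. apply ex_pd_div; [exact (Hv_ex a Ha) | |].
- apply ex_pd_sqrt; [apply ex_pd_dot|]; assumption.
- apply Rgt_not_eq, sqrt_lt_R0. exact Hv.
Qed.

Lemma ex_pd_e3 a : ex_pd c (e3_of g v e2 a) p.
Proof.
unfold e3_of, cross.
ex_pd_poly ltac:(idtac; match goal with
  | |- ex_pd _ (fun q => ginv g ?a ?b q) _ => exact (ex_pd_ginv a b)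
  | |- ex_pd _ (fun q => sqrt (detg g q)) _ => exact ex_pd_sqrt_detg
  | |- ex_pd _ (fun q => e1_of g v ?a q) _ => exact (ex_pd_e1 a ltac:(lia))
  | |- ex_pd _ (fun q => e2 ?a q) _ => exact (He2_ex a ltac:(lia)) end).
Qed.

Lemma ex_pd_frame k d : (d < 3)%nat -> ex_pd c (frame g v e2 k d) p.
Proof.
intros Hd. destruct k as [|[|[|k]]];
  [exact (ex_pd_e3 d) | exact (ex_pd_e1 d Hd) | exact (He2_ex d Hd) | exact (ex_pd_e3 d)].
Qed.

Lemma ex_pd_flat (J : vf) d : (d < 3)%nat -> (forall a, (a < 3)%nat -> ex_pd c (J a) p) ->
  ex_pd c (flat g J d) p.
Proof.
intros Hd HJ. unfold flat.
ex_pd_poly ltac:(idtac; match goal with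
  | |- ex_pd _ (fun q => J ?a q) _ => exact (HJ a ltac:(lia)) end).
Qed.

End FrameRegularity.

Lemma dot_Jfield_l g (v e2 : vf) (al mu : pt -> R) (Y : vf) q :
  dot g (Jfield g v e2 al mu) Y q = al q * (dot g e2 Y q + mu q * dot g (e3_of g v e2) Y q).
Proof. unfold dot, Jfield, sum3. ring. Qed.

Section Compatibility.
Variables (U : pt -> Prop) (g : metric) (v e2 : vf) (C : nat -> nat -> nat -> pt -> R).
Hypothesis HU : open U.
Hypothesis HR : riemannian U g.
Hypothesis Hv : smooth_vf U v.
Hypothesis Hv0 : forall p, U p -> ~ (v 0%nat p = 0 /\ v 1%nat p = 0 /\ v 2%nat p = 0).
Hypothesis He2 : smooth_vf U e2.
Hypothesis Horth : forall p, U p -> dot g (e1_of g v) e2 p = 0 /\ dot g e2 e2 p = 1.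
Hypothesis HC : forall i j b p, (1 <= i <= 3)%nat -> (1 <= j <= 3)%nat -> U p ->
  bracket (frame g v e2 i) (frame g v e2 j) b p
  = C i j 1%nat p * frame g v e2 1%nat b p + C i j 2%nat p * frame g v e2 2%nat b p
    + C i j 3%nat p * frame g v e2 3%nat b p.

Lemma dot_v_pos p : U p -> 0 < dot g v v p.
Proof. intros Hp. exact (riemannian_dot_pos U g v p HR Hp (Hv0 p Hp)). Qed.

Lemma vnorm_pos p : U p -> 0 < vnorm g v p.
Proof. intros Hp. apply sqrt_lt_R0, dot_v_pos, Hp. Qed.

Lemma frame_orthonormal_on p i j : U p -> (1 <= i <= 3)%nat -> (1 <= j <= 3)%nat ->
  dot g (frame g v e2 i) (frame g v e2 j) p = if Nat.eqb i j then 1 else 0.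
Proof.
intros Hp. destruct (Horth p Hp).
apply frame_orthonormal; auto.
- exact (riemannian_sym U g p HR Hp).
- exact (riemannian_detg_sym_pos U g p HR Hp).
- exact (dot_v_pos p Hp).
Qed.

Lemma ex_pd_flat_on (J : vf) c d p : U p -> (c < 3)%nat -> (d < 3)%nat ->
  (forall a, (a < 3)%nat -> ex_pd c (J a) p) -> ex_pd c (flat g J d) p.
Proof.
intros Hp Hc Hd HJ. apply ex_pd_flat; [| exact Hd | exact HJ].
intros a b Ha Hb. destruct HR as [Hg _]. exact (ex_pd_smooth c p U _ (Hg a b Ha Hb) Hc Hp).
Qed.

Lemma ex_pd_vnorm_on c p : U p -> (c < 3)%nat -> ex_pd c (vnorm g v) p.
Proof.
intros Hp Hc. apply ex_pd_sqrt; [|exact (dot_v_pos p Hp)].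
destruct HR as [Hg _]. apply (ex_pd_dot g p c).
- intros a b Ha Hb. exact (ex_pd_smooth c p U _ (Hg a b Ha Hb) Hc Hp).
- intros a Ha. exact (ex_pd_smooth c p U _ (Hv a Ha) Hc Hp).
- intros a Ha. exact (ex_pd_smooth c p U _ (Hv a Ha) Hc Hp).
Qed.

Lemma ex_pd_frame_on c k d p : U p -> (c < 3)%nat -> (d < 3)%nat ->
  ex_pd c (frame g v e2 k d) p.
Proof.
intros Hp Hc Hd. pose proof (riemannian_sym U g p HR Hp).
pose proof (riemannian_detg_sym_pos U g p HR Hp). pose proof (dot_v_pos p Hp).
destruct HR as [Hg _]. apply ex_pd_frame; auto.
- intros a b Ha Hb. exact (ex_pd_smooth c p U _ (Hg a b Ha Hb) Hc Hp).
- intros a Ha. exact (ex_pd_smooth c p U _ (Hv a Ha) Hc Hp).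
- intros a Ha. exact (ex_pd_smooth c p U _ (He2 a Ha) Hc Hp).
Qed.

Lemma ex_pd_Jfield_on al mu c a p : smooth U al -> smooth U mu -> U p ->
  (c < 3)%nat -> (a < 3)%nat -> ex_pd c (Jfield g v e2 al mu a) p.
Proof.
intros Hal Hmu Hp Hc Ha. unfold Jfield.
apply ex_pd_mult; [exact (ex_pd_smooth c p U al Hal Hc Hp)|].
apply ex_pd_plus; [exact (ex_pd_smooth c p U (e2 a) (He2 a Ha) Hc Hp)|].
apply ex_pd_mult; [exact (ex_pd_smooth c p U mu Hmu Hc Hp)|].
exact (ex_pd_frame_on c 3 a p Hp Hc Ha).
Qed.

Lemma frame_deriv_e1_ddir h p : U p -> ddir g (e1_of g v) h p = frame_deriv (frame g v e2) 1 h p.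
Proof.
intros Hp. apply ddirE; [exact (riemannian_sym U g p HR Hp) |].
exact (riemannian_detg_sym_pos U g p HR Hp).
Qed.

Lemma Jfield_frame_comps al mu q : U q ->
  frame_comp g (frame g v e2) (Jfield g v e2 al mu) 1 q = 0
  /\ frame_comp g (frame g v e2) (Jfield g v e2 al mu) 2 q = al q
  /\ frame_comp g (frame g v e2) (Jfield g v e2 al mu) 3 q = al q * mu q.
Proof.
intros Hq. unfold frame_comp.
rewrite !dot_flat, !dot_Jfield_l by exact (riemannian_sym U g q HR Hq).
pose proof (fun i j => frame_orthonormal_on q i j Hq) as Hon.
pose proof (Hon 2%nat 1%nat ltac:(lia) ltac:(lia)) as H21.
pose proof (Hon 2%nat 2%nat ltac:(lia) ltac:(lia)) as H22.
pose proof (Hon 2%nat 3%nat ltac:(lia) ltac:(lia)) as H23.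
pose proof (Hon 3%nat 1%nat ltac:(lia) ltac:(lia)) as H31.
pose proof (Hon 3%nat 2%nat ltac:(lia) ltac:(lia)) as H32.
pose proof (Hon 3%nat 3%nat ltac:(lia) ltac:(lia)) as H33.
simpl in H21, H22, H23, H31, H32, H33. simpl.
rewrite H21, H22, H23, H31, H32, H33. repeat split; ring.
Qed.

Lemma poisson_at_of_frame_comps (J : vf) (A B : pt -> R) p : U p ->
  (forall c a, (c < 3)%nat -> (a < 3)%nat -> ex_pd c (J a) p) ->
  (forall q, U q -> frame_comp g (frame g v e2) J 1 q = 0 /\ frame_comp g (frame g v e2) J 2 q = A q
                    /\ frame_comp g (frame g v e2) J 3 q = B q) ->
  frame_helicity (frame g v e2) C A B p = 0 -> dot g J (curl g J) p = 0.
Proof.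
intros Hp HJ Hcomps.
apply (poisson_at_of_frame_helicity U g (frame g v e2) C J A B p HU Hp); auto.
- exact (riemannian_sym U g p HR Hp).
- intros c d Hc Hd. apply ex_pd_flat_on; auto.
- intros c k d Hc Hd. apply ex_pd_frame_on; assumption.
- intros i j Hi Hj. rewrite dot_flat by exact (riemannian_sym U g p HR Hp).
  rewrite frame_orthonormal_on by (assumption || lia). reflexivity.
Qed.

Lemma frame_deriv_e1_of_log al mu p : smooth U al -> U p -> al p <> 0 ->
  ddir g (e1_of g v) (fun q => ln (Rabs (al q / vnorm g v q))) p
  = C 3%nat 1%nat 3%nat p + mu p * C 1%nat 2%nat 3%nat p ->
  frame_deriv (frame g v e2) 1 al p
  = al p * (C 3%nat 1%nat 3%nat p + mu p * C 1%nat 2%nat 3%nat p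
            + frame_deriv (frame g v e2) 1 (vnorm g v) p / vnorm g v p).
Proof.
intros Hal Hp Hal0 Hlog. rewrite <- Hlog, frame_deriv_e1_ddir by exact Hp.
pose proof (vnorm_pos p Hp) as Hn.
unfold frame_deriv, sum3.
rewrite !pd_ln_abs_div by
  (first [apply ex_pd_vnorm_on | apply (ex_pd_smooth _ _ U) | idtac]; (assumption || lia)).
field. split; lra.
Qed.

Definition riccati (mu : pt -> R) (p : pt) : R :=
  - C 3%nat 1%nat 2%nat p - mu p * (C 3%nat 1%nat 3%nat p + C 1%nat 2%nat 2%nat p)
  - mu p ^ 2 * C 1%nat 2%nat 3%nat p.

Lemma poisson_Jfield al mu : smooth U al -> smooth U mu ->
  (forall p, U p -> ddir g (e1_of g v) mu p = riccati mu p) ->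
  poisson U g (Jfield g v e2 al mu).
Proof.
intros Hal Hmu Hric p Hp.
apply (poisson_at_of_frame_comps _ al (fun q => al q * mu q) p Hp).
- intros c a Hc Ha. apply ex_pd_Jfield_on; assumption.
- intros q Hq. apply Jfield_frame_comps, Hq.
- unfold frame_helicity.
  rewrite frame_deriv_mult by (intros; apply (ex_pd_smooth _ _ U); assumption).
  rewrite <- (frame_deriv_e1_ddir mu p Hp), (Hric p Hp). unfold riccati. ring.
Qed.

Lemma poisson_Jfield_add al1 mu1 al2 mu2 :
  smooth U al1 -> smooth U mu1 -> smooth U al2 -> smooth U mu2 ->
  (forall p, U p -> ddir g (e1_of g v) mu1 p = riccati mu1 p) ->
  (forall p, U p -> ddir g (e1_of g v) mu2 p = riccati mu2 p) ->
  (forall p, U p -> al1 p <> 0) -> (forall p, U p -> al2 p <> 0) ->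
  (forall p, U p -> ddir g (e1_of g v) (fun q => ln (Rabs (al1 q / vnorm g v q))) p
     = C 3%nat 1%nat 3%nat p + mu1 p * C 1%nat 2%nat 3%nat p) ->
  (forall p, U p -> ddir g (e1_of g v) (fun q => ln (Rabs (al2 q / vnorm g v q))) p
     = C 3%nat 1%nat 3%nat p + mu2 p * C 1%nat 2%nat 3%nat p) ->
  poisson U g (vadd (Jfield g v e2 al1 mu1) (Jfield g v e2 al2 mu2)).
Proof.
intros Hal1 Hmu1 Hal2 Hmu2 Hric1 Hric2 Hal10 Hal20 Hlog1 Hlog2 p Hp.
assert (Hex : forall f, smooth U f -> forall c, (c < 3)%nat -> ex_pd c f p)
  by (intros; apply (ex_pd_smooth _ _ U); assumption).
apply (poisson_at_of_frame_comps _ (fun q => al1 q + al2 q)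
  (fun q => al1 q * mu1 q + al2 q * mu2 q) p Hp).
- intros c a Hc Ha. apply ex_pd_plus; apply ex_pd_Jfield_on; assumption.
- intros q Hq. rewrite !frame_comp_vadd.
  destruct (Jfield_frame_comps al1 mu1 q Hq) as [-> [-> ->]].
  destruct (Jfield_frame_comps al2 mu2 q Hq) as [-> [-> ->]].
  repeat split; ring.
- unfold frame_helicity.
  rewrite (frame_deriv_plus (frame g v e2) 1 al1 al2 p) by auto.
  rewrite (frame_deriv_plus (frame g v e2) 1 (fun q => al1 q * mu1 q) (fun q => al2 q * mu2 q) p)
    by (intros; apply ex_pd_mult; auto).
  rewrite !frame_deriv_mult by auto.
  rewrite (frame_deriv_e1_of_log al1 mu1), (frame_deriv_e1_of_log al2 mu2) by auto.
  rewrite <- (frame_deriv_e1_ddir mu1 p Hp), <- (frame_deriv_e1_ddir mu2 p Hp).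
  rewrite (Hric1 p Hp), (Hric2 p Hp). unfold riccati. ring.
Qed.

End Compatibility.

Theorem corollary1 (U : pt -> Prop) (g : metric) (v e2 : vf)
  (C : nat -> nat -> nat -> pt -> R) (mu1 mu2 alpha1 alpha2 : pt -> R) :
  open U ->
  riemannian U g ->
  smooth_vf U v ->
  (forall p, U p -> ~ (v 0%nat p = 0 /\ v 1%nat p = 0 /\ v 2%nat p = 0)) ->
  smooth_vf U e2 ->
  (forall p, U p -> dot g (e1_of g v) e2 p = 0 /\ dot g e2 e2 p = 1) ->
  (forall i j b p, (1 <= i <= 3)%nat -> (1 <= j <= 3)%nat -> U p ->
     bracket (frame g v e2 i) (frame g v e2 j) b p
     = C i j 1%nat p * frame g v e2 1%nat b p
       + C i j 2%nat p * frame g v e2 2%nat b p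
       + C i j 3%nat p * frame g v e2 3%nat b p) ->
  smooth U mu1 -> smooth U mu2 ->
  (forall p, U p -> mu1 p <> mu2 p) ->
  (forall p, U p -> ddir g (e1_of g v) mu1 p
     = - C 3%nat 1%nat 2%nat p - mu1 p * (C 3%nat 1%nat 3%nat p + C 1%nat 2%nat 2%nat p)
       - mu1 p ^ 2 * C 1%nat 2%nat 3%nat p) ->
  (forall p, U p -> ddir g (e1_of g v) mu2 p
     = - C 3%nat 1%nat 2%nat p - mu2 p * (C 3%nat 1%nat 3%nat p + C 1%nat 2%nat 2%nat p)
       - mu2 p ^ 2 * C 1%nat 2%nat 3%nat p) ->
  smooth U alpha1 -> smooth U alpha2 ->
  (forall p, U p -> alpha1 p <> 0) ->
  (forall p, U p -> alpha2 p <> 0) ->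
  (forall p, U p -> ddir g (e1_of g v) (fun q => ln (Rabs (alpha1 q / vnorm g v q))) p
     = C 3%nat 1%nat 3%nat p + mu1 p * C 1%nat 2%nat 3%nat p) ->
  (forall p, U p -> ddir g (e1_of g v) (fun q => ln (Rabs (alpha2 q / vnorm g v q))) p
     = C 3%nat 1%nat 3%nat p + mu2 p * C 1%nat 2%nat 3%nat p) ->
  compatible U g (Jfield g v e2 alpha1 mu1) (Jfield g v e2 alpha2 mu2).
Proof.
intros HU HR Hv Hv0 He2 Horth HC Hmu1 Hmu2 _ Hric1 Hric2 Hal1 Hal2 Hal10 Hal20 Hlog1 Hlog2.
split; [|split].
- exact (poisson_Jfield U g v e2 C HU HR Hv Hv0 He2 Horth HC alpha1 mu1 Hal1 Hmu1 Hric1).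
- exact (poisson_Jfield U g v e2 C HU HR Hv Hv0 He2 Horth HC alpha2 mu2 Hal2 Hmu2 Hric2).
- exact (poisson_Jfield_add U g v e2 C HU HR Hv Hv0 He2 Horth HC alpha1 mu1 alpha2 mu2
    Hal1 Hmu1 Hal2 Hmu2 Hric1 Hric2 Hal10 Hal20 Hlog1 Hlog2).
Qed.
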